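(* Let $l,t,s,n$ be integers with $n\geq 2s+1$, $2\leq l\leq t$ and $s\geq l+1$. Then $$ex(n,\{K_{l,t},M_{s+1}\},l-1)\leq (l-1)n+ex(2(s-l+1)+1,K_{l,t})-\frac{l(l-1)}{2}.$$
   Context: All graphs are finite and simple. $ex(m,K_{l,t})$ is the maximum number of edges of an $m$-vertex graph with no copy of the complete bipartite graph $K_{l,t}$; $M_{s+1}$ is the matching of $s+1$ disjoint edges. For a graph $G$ with matching number at most $s$, say $X\subseteq V(G)$ is admissible if $|X|+\sum_{i=1}^m\lfloor |V(C_i)|/2\rfloor\leq s$, where $C_1,\dots,C_m$ are the components of $G-X$; let $x(G)$ be the maximum size of an admissible set. Let $\mathscr{G}_x$ be the set of graphs on $n$ vertices containing neither $K_{l,t}$ nor $M_{s+1}$ as a subgraph and with $x(G)=x$, and $ex(n,\{K_{l,t},M_{s+1}\},x)=\max_{G\in\mathscr{G}_x}e(G)$. *)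

(* A simple graph on the vertex set 'I_n is represented by its
   edge set E : {set {set 'I_n}}, every edge being a 2-element vertex set. *)
From mathcomp Require Import all_boot all_order.
Set Implicit Arguments.
Unset Strict Implicit.
Unset Printing Implicit Defensive.

Section Graphs.
Variable n : nat.
Notation V := 'I_n.

Definition simple_graph (E : {set {set V}}) : bool :=
  [forall e in E, #|e| == 2].

Definition nedges (E : {set {set V}}) : nat := #|E|.

Definition has_Klt (l t : nat) (E : {set {set V}}) : bool :=
  [exists A : {set V}, exists B : {set V},
     [&& #|A| == l, #|B| == t, [disjoint A & B] &
         [forall a in A, forall b in B, [set a; b] \in E]]].

Definition has_matching (k : nat) (E : {set {set V}}) : bool :=
  [exists M : {set {set V}}, [&& M \subset E, #|M| == k & trivIset M]].

Definition adjD (E : {set {set V}}) (X : {set V}) : rel V :=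
  fun u v => [&& u \notin X, v \notin X & [set u; v] \in E].

Definition componentsD (E : {set {set V}}) (X : {set V}) : {set {set V}} :=
  [set [set v | connect (adjD E X) u v] | u in ~: X].

Definition admissible (s : nat) (E : {set {set V}}) (X : {set V}) : bool :=
  #|X| + \sum_(C in componentsD E X) (#|C| %/ 2) <= s.

Definition xG (s : nat) (E : {set {set V}}) : nat :=
  \max_(X : {set V} | admissible s E X) #|X|.

End Graphs.

Definition ex_Klt (m l t : nat) : nat :=
  \max_(E : {set {set 'I_m}} | simple_graph E && ~~ has_Klt l t E) nedges E.

Definition ex_Klt_M_x (n l t s x : nat) : nat :=
  \max_(E : {set {set 'I_n}} |
          [&& simple_graph E, ~~ has_Klt l t E, ~~ has_matching s.+1 E
            & xG s E == x]) nedges E.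

(* Fix an admissible X with |X| = x(G) = l - 1.  At most
   C(n,2) - C(n-l+1,2) = (l-1)n - C(l,2) edges meet X.  Pick a root in every
   component of G - X; admissibility bounds the non-root vertices by
   sum_C (|C| - 1) <= 2(s - l + 1).  Sending all roots (and X) to one vertex 0
   and the non-roots injectively to 1, ..., 2(s - l + 1) is injective on every
   component, hence maps the edges of G - X injectively onto a simple graph on
   2(s - l + 1) + 1 vertices.  That graph is K_{l,t}-free: a copy of K_{l,t}
   with l, t >= 2 pulls back into a single component of G - X, where 0 has at
   most one preimage. *)

From mathcomp Require Import all_boot all_order zify.
Set Implicit Arguments.
Unset Strict Implicit.
Unset Printing Implicit Defensive.

Section Adjacency.
Variable n : nat.
Implicit Types (E F : {set {set 'I_n}}) (X : {set 'I_n}).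

Definition adj F : rel 'I_n := fun u v => [set u; v] \in F.

Lemma connect_adj_sym F : connect_sym (adj F).
Proof. by apply: sym_connect_sym => u v; rewrite /adj setUC. Qed.

Lemma adj_neq F u v : simple_graph F -> adj F u v -> u != v.
Proof. by move=> /forall_inP Fs /Fs; rewrite cards2; case: (u != v). Qed.

Lemma edgeP F e : simple_graph F -> e \in F -> exists u v, e = [set u; v].
Proof.
by move=> /forall_inP Fs /Fs /cards2P [u [v [_ ->]]]; exists u, v.
Qed.

Lemma connect_edge F e a b :
  simple_graph F -> e \in F -> a \in e -> b \in e -> connect (adj F) a b.
Proof.
move=> Fs eF; have [u [v euv]] := edgeP Fs eF.
have uv : adj F u v by rewrite /adj -euv.
have vu : adj F v u by rewrite /adj setUC -euv.
by rewrite euv => /set2P [->|->] /set2P [->|->]; rewrite ?connect0 ?connect1.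
Qed.

Definition edgesD E X := [set e in E | e \subset ~: X].

Lemma edgesD_sub E X : edgesD E X \subset E.
Proof. by apply/subsetP => e; rewrite inE => /andP []. Qed.

Lemma simple_graphS E F : F \subset E -> simple_graph E -> simple_graph F.
Proof.
by move=> /subsetP FE /forall_inP Es; apply/forall_inP => e /FE /Es.
Qed.

Lemma has_KltS l t E F : F \subset E -> has_Klt l t F -> has_Klt l t E.
Proof.
move=> /subsetP FE /existsP [A /existsP [B /and4P [cA cB dAB /forall_inP AB]]].
apply/existsP; exists A; apply/existsP; exists B; rewrite cA cB dAB /=.
by apply/forall_inP => a aA; apply/forall_inP => b bB; apply/FE/(forall_inP (AB a aA)).
Qed.

Lemma adjD_edgesD E X : adjD E X =2 adj (edgesD E X).
Proof.
move=> u v; rewrite /adjD /adj inE subUset !sub1set !inE.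
by case: (u \in X); case: (v \in X); case: (_ \in E).
Qed.

End Adjacency.

Lemma exists_neq (T : finType) (A : {set T}) x : 1 < #|A| -> exists2 a, a \in A & a != x.
Proof.
move=> cA; have /card_gt0P [a] : 0 < #|A :\ x|.
  by move: cA; rewrite (cardsD1 x); case: (_ \in _) => /=; lia.
by rewrite in_setD1 => /andP [ax aA]; exists a.
Qed.

Section Collapse.
Variables (n p : nat) (F : {set {set 'I_n}}) (f : 'I_n -> 'I_p) (w0 : 'I_p).
Hypothesis F_simple : simple_graph F.
Hypothesis f_fibers : forall u v, u != v -> f u = f v -> f u = w0.
Hypothesis f_inj_connect : forall u v, connect (adj F) u v -> f u = f v -> u = v.

Definition collapse := [set f @: e | e : {set 'I_n} in F].

Lemma fiber_single u v : f u = f v -> f u != w0 -> u = v.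
Proof.
by move=> fuv; case: (eqVneq u v) => // /f_fibers /(_ fuv) ->; rewrite eqxx.
Qed.

Lemma adj_image_neq u v : adj F u v -> f u != f v.
Proof.
move=> uv; apply/eqP => /(f_inj_connect (connect1 uv)) equv.
by move: (adj_neq F_simple uv); rewrite equv eqxx.
Qed.

Lemma collapse_simple : simple_graph collapse.
Proof.
apply/forall_inP => _ /imsetP [e eF ->].
have [u [v euv]] := edgeP F_simple eF.
by rewrite euv imsetU1 imset_set1 cards2 adj_image_neq // /adj -euv.
Qed.

Lemma collapse_edge_sub e e' : e \in F -> e' \in F -> f @: e = f @: e' -> e \subset e'.
Proof.
move=> eF e'F fee'.
have fe' w : w \in e -> exists2 w', w' \in e' & f w = f w'.
  by move=> we; apply/imsetP; rewrite -fee' imset_f.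
have off_w0 w : w \in e -> f w != w0 -> w \in e'.
  by move=> we fw; have [w' w'e' fww'] := fe' w we; rewrite (fiber_single fww').
apply/subsetP => w we; have [fw|] := eqVneq (f w) w0; last exact: off_w0.
have [z ze fz] : exists2 z, z \in e & f z != w0.
  have [u [v euv]] := edgeP F_simple eF.
  have fuv : f u != f v by rewrite adj_image_neq // /adj -euv.
  have [fu|fu] := eqVneq (f u) w0; [exists v | exists u]; rewrite ?euv ?set21 ?set22 //.
  by rewrite -fu eq_sym.
have [w' w'e' fww'] := fe' w we.
suff -> : w = w' by [].
apply: f_inj_connect fww'; apply: connect_trans (connect_edge F_simple eF we ze) _.
exact: connect_edge F_simple e'F (off_w0 z ze fz) w'e'.
Qed.

Lemma card_collapse : #|collapse| = #|F|.
Proof.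
rewrite card_in_imset // => e e' eF e'F fee'.
by apply/eqP; rewrite eqEsubset !collapse_edge_sub.
Qed.

Lemma collapse_edgeP i j : i != j -> [set i; j] \in collapse ->
  exists u v, [/\ adj F u v, f u = i & f v = j].
Proof.
move=> ij /imsetP [e eF fe].
have /imsetP [u ue iu] : i \in f @: e by rewrite -fe set21.
have /imsetP [v ve jv] : j \in f @: e by rewrite -fe set22.
exists u, v; split => //.
have uv : u != v by apply: contraNneq ij => uv; rewrite iu jv uv.
have ce : #|e| == 2 by apply: (forall_inP F_simple).
have uve : [set u; v] \subset e by apply/subsetP => w /set2P [->|->].
rewrite /adj; suff -> : [set u; v] = e by [].
by apply/eqP; rewrite eqEcard uve cards2 uv (eqP ce).
Qed.

(* A complete bipartite graph with both sides of size at least 2 is connected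
   and has a vertex other than [w0] on each side; the unique preimages of
   those vertices tie all preimage edges to a single component of [F]. *)
Lemma complete_bipartite_component (A B : {set 'I_p}) :
  [disjoint A & B] -> 1 < #|A| -> 1 < #|B| ->
  {in A & B, forall a b, [set a; b] \in collapse} ->
  exists r, {in A & B, forall a b, exists u v,
    [/\ adj F u v, f u = a, f v = b, connect (adj F) r u & connect (adj F) r v]}.
Proof.
move=> dAB cA cB AB.
have edge a b : a \in A -> b \in B -> exists u v, [/\ adj F u v, f u = a & f v = b].
  move=> aA bB; apply: collapse_edgeP (AB a b aA bB).
  by apply: contraTneq bB => <-; rewrite (disjointFr dAB aA).
have [a1 a1A a1w0] := exists_neq w0 cA.
have [b1 b1B b1w0] := exists_neq w0 cB.
have [r [v1 [rv1 fr fv1]]] := edge a1 b1 a1A b1B.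
have in_comp w u : w \in A :|: B -> w != w0 -> f u = w -> connect (adj F) r u.
  case/setUP => [wA|wB] ww0 fu.
  - have [u' [v' [u'v' fu' fv']]] := edge w b1 wA b1B.
    rewrite (fiber_single (etrans fu (esym fu'))) ?fu //.
    have ev' : v' = v1 by apply: fiber_single; rewrite fv' ?fv1.
    apply: connect_trans (connect1 rv1) _.
    by rewrite connect_adj_sym connect1 // -ev'.
  - have [u' [v' [u'v' fu' fv']]] := edge a1 w a1A wB.
    rewrite (fiber_single (etrans fu (esym fv'))) ?fu //.
    have <- : u' = r by apply: fiber_single; rewrite fu' ?fr.
    exact: connect1.
exists r => a b aA bB; have [u [v [uv fu fv]]] := edge a b aA bB.
exists u, v; have [fu0|fu0] := eqVneq (f u) w0.
- have rv : connect (adj F) r v.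
    apply: (in_comp b); rewrite ?inE ?bB ?orbT //.
    by rewrite -fv -fu0 eq_sym adj_image_neq.
  by split => //; apply: connect_trans rv _; rewrite connect_adj_sym connect1.
- have ru : connect (adj F) r u by apply: (in_comp a); rewrite ?inE ?aA // -fu.
  by split => //; apply: connect_trans ru (connect1 uv).
Qed.

Lemma lift_complete_bipartite (A B : {set 'I_p}) :
  [disjoint A & B] -> 1 < #|A| -> 1 < #|B| ->
  {in A & B, forall a b, [set a; b] \in collapse} ->
  exists g : 'I_p -> 'I_n,
    {in A :|: B, cancel g f} /\ {in A & B, forall a b, adj F (g a) (g b)}.
Proof.
move=> dAB cA cB AB; have [r edge] := complete_bipartite_component dAB cA cB AB.
pose g w := if w == w0 then odflt r [pick u | (f u == w0) && connect (adj F) r u]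
            else odflt r [pick u | f u == w].
have gE w u : connect (adj F) r u -> f u = w -> g w = u.
  move=> ru fu; rewrite /g; case: eqP => [ww0|/eqP ww0].
    case: pickP => [u' /andP [/eqP fu' ru'] | /(_ u)] /=; last by rewrite fu ww0 eqxx ru.
    apply: f_inj_connect; last by rewrite fu' -ww0 fu.
    by apply: connect_trans ru; rewrite connect_adj_sym.
  case: pickP => [u' /eqP fu' | /(_ u)] /=; last by rewrite fu eqxx.
  by apply: fiber_single; rewrite fu' ?fu.
exists g; split.
  have [a0 a0A _] := exists_neq w0 cA; have [b0 b0B _] := exists_neq w0 cB.
  move=> w /setUP [wA|wB].
  - by have [u [v [_ fu _ ru _]]] := edge w b0 wA b0B; rewrite (gE w u).
  - by have [u [v [_ _ fv _ rv]]] := edge a0 w a0A wB; rewrite (gE w v).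
move=> a b aA bB; have [u [v [uv fu fv ru rv]]] := edge a b aA bB.
by rewrite (gE a u) ?(gE b v).
Qed.

Lemma collapse_free l t :
  1 < l -> 1 < t -> ~~ has_Klt l t F -> ~~ has_Klt l t collapse.
Proof.
move=> l2 t2; apply: contra => /existsP [A /existsP [B]].
case/and4P => /eqP cA /eqP cB dAB /forall_inP AB.
have [|||g [gK gadj]] := @lift_complete_bipartite A B dAB; rewrite ?cA ?cB //.
  by move=> a b aA bB; apply: (forall_inP (AB a aA)).
have g_inj := can_in_inj gK.
have ginj_A : {in A &, injective g}.
  by move=> a a' aA a'A; apply: g_inj; rewrite inE ?aA ?a'A.
have ginj_B : {in B &, injective g}.
  by move=> b b' bB b'B; apply: g_inj; rewrite inE ?bB ?b'B orbT.
apply/existsP; exists (g @: A); apply/existsP; exists (g @: B).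
rewrite !card_in_imset // cA cB !eqxx /=; apply/andP; split.
  apply/pred0P => x /=; apply/negP => /andP [/imsetP [a aA ->] /imsetP [b bB gab]].
  have ab : a = b by apply: g_inj gab; rewrite inE ?aA ?bB ?orbT.
  by move: (disjointFr dAB aA); rewrite ab bB.
apply/forall_inP => _ /imsetP [a aA ->]; apply/forall_inP => _ /imsetP [b bB ->].
exact: gadj.
Qed.

Lemma card_le_ex_Klt l t :
  1 < l -> 1 < t -> ~~ has_Klt l t F -> #|F| <= ex_Klt p l t.
Proof.
move=> l2 t2 FK; rewrite -card_collapse.
apply: (@leq_bigmax_cond _ (fun E => simple_graph E && ~~ has_Klt l t E) (@nedges p)).
by rewrite collapse_simple collapse_free.
Qed.

End Collapse.

Section Marking.
Variable T : finType.

Lemma exists_marking (N : {set T}) m : #|N| <= m ->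
  exists f : T -> 'I_m.+1,
    (forall v, (f v == ord0) = (v \notin N)) /\ {in N &, injective f}.
Proof.
move=> cN; pose f v : 'I_m.+1 := if v \in N then inord (index v (enum N)).+1 else ord0.
have fN v : v \in N -> f v = (index v (enum N)).+1 :> nat.
  move=> vN; rewrite /f vN inordK // ltnS (leq_trans _ cN) //.
  by rewrite cardE index_mem mem_enum.
exists f; split.
  move=> v; case vN: (v \in N); last by rewrite /f vN eqxx.
  by apply/negbTE; rewrite -val_eqE /= fN.
move=> v w vN wN /(congr1 val); rewrite /= !fN // => -[].
by move/index_inj; apply; rewrite ?mem_enum.
Qed.

Lemma component_marking (e : rel T) m : connect_sym e ->
  #|[set v | root e v != v]| <= m ->
  exists f : T -> 'I_m.+1,
    (forall u v, u != v -> f u = f v -> f u = ord0) /\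
    (forall u v, connect e u v -> f u = f v -> u = v).
Proof.
move=> sym_e cN; have [f [f0 f_inj]] := exists_marking cN.
have f_fibers u v : u != v -> f u = f v -> f u = ord0.
  move=> uv fuv; apply/eqP; rewrite f0; apply: contra uv => uN.
  have vN : v \in [set v | root e v != v] by rewrite -[_ \in _]negbK -f0 -fuv f0 uN.
  by rewrite (f_inj u v).
exists f; split => // u v cuv fuv; have [//|uv] := eqVneq u v.
have /eqP := f_fibers u v uv fuv; rewrite f0 inE negbK => /eqP ru.
have /eqP : f v = ord0 by rewrite -fuv (f_fibers u v).
rewrite f0 inE negbK => /eqP rv.
by rewrite -ru -rv; apply/rootP.
Qed.

Lemma card_nonroots (e : rel T) (D : {set T}) : connect_sym e ->
  #|[set v in D | root e v != v]|
    <= \sum_(C in [set [set v | connect e u v] | u in D]) (#|C| - 1).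
Proof.
move=> sym_e; rewrite -sum1_card.
rewrite (partition_big (fun v => [set w | connect e v w])
           (mem [set [set v | connect e u v] | u in D])); last first.
  by move=> v; rewrite inE => /andP [vD _]; apply/imsetP; exists v.
apply: leq_sum => _ /imsetP [u uD ->]; rewrite sum1dep_card.
have ru : root e u \in [set v | connect e u v] by rewrite inE connect_root.
rewrite [#|[set v | connect e u v]|](cardsD1 (root e u)) ru add1n subSS subn0.
apply: subset_leq_card; apply/subsetP => v; rewrite !inE => /andP [/andP [vD rv] /eqP cv].
have : v \in [set w | connect e v w] by rewrite inE.
rewrite cv inE => uv.
by rewrite uv (rootP sym_e uv) eq_sym rv.
Qed.

End Marking.

Section Admissible.
Variables (n s : nat) (E : {set {set 'I_n}}).

Lemma exists_admissible_max : 0 < xG s E ->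
  exists2 X, admissible s E X & #|X| = xG s E.
Proof.
move=> xpos; have [X0 X0adm] : exists X, admissible s E X.
  apply/existsP; apply: contraTT xpos => /existsPn none.
  by rewrite /xG big_pred0 // => X; apply/negbTE/none.
exists [arg max_(X > X0 | admissible s E X) #|X|]; first by case: arg_maxnP.
exact/esym/bigmax_eq_arg.
Qed.

Lemma adjD_connect_sym (X : {set 'I_n}) : connect_sym (adjD E X).
Proof.
by move=> u v; rewrite !(eq_connect (adjD_edgesD E X)) connect_adj_sym.
Qed.

Lemma root_adjD_in (X : {set 'I_n}) v : v \in X -> root (adjD E X) v = v.
Proof.
move=> vX; case/connectP: (connect_root (adjD E X) v) => [[|w q] //= + ->].
by rewrite /adjD vX.
Qed.

Lemma card_nonroots_adjD (X : {set 'I_n}) : admissible s E X ->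
  #|[set v | root (adjD E X) v != v]| <= 2 * (s - #|X|).
Proof.
rewrite /admissible => Xadm.
have -> : [set v | root (adjD E X) v != v] = [set v in ~: X | root (adjD E X) v != v].
  apply/setP => v; rewrite !inE; case vX: (v \in X) => //=.
  by rewrite root_adjD_in ?eqxx.
apply: leq_trans (card_nonroots _ (adjD_connect_sym X)) _.
apply: (@leq_trans (\sum_(C in componentsD E X) 2 * (#|C| %/ 2))).
  apply: leq_sum => C _; rewrite {1}(divn_eq #|C| 2).
  by have := ltn_pmod #|C| (isT : 0 < 2); lia.
by rewrite -big_distrr leq_mul2l /= leq_subRL // (leq_trans (leq_addr _ _) Xadm).
Qed.

Lemma card_edges_meeting (X : {set 'I_n}) : simple_graph E ->
  #|E :\: edgesD E X| <= 'C(n, 2) - 'C(n - #|X|, 2).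
Proof.
move=> /forall_inP Es.
have sub : E :\: edgesD E X \subset
           [set e : {set 'I_n} | #|e| == 2] :\: [set e : {set 'I_n} | e \subset ~: X].
  apply/subsetP => e; rewrite !inE => /andP [eX eE].
  by rewrite eE /= in eX; rewrite eX Es.
apply: leq_trans (subset_leq_card sub) _.
rewrite cardsD card_draws card_ord leq_sub2l //.
have -> : [set e : {set 'I_n} | #|e| == 2] :&: [set e : {set 'I_n} | e \subset ~: X] =
          [set e : {set 'I_n} | e \subset ~: X & #|e| == 2].
  by apply/setP => e; rewrite !inE andbC.
by rewrite cards_draws [#|~: X|]cardsCs setCK card_ord.
Qed.

End Admissible.

Lemma bin2_sub x n : x <= n -> 'C(n, 2) - 'C(n - x, 2) + 'C(x.+1, 2) = x * n.
Proof.
move=> /subnK <-; move: (n - x) => m; rewrite addnK.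
elim: x => [|x IH]; first by rewrite addn0 subnn.
have mono : 'C(m, 2) <= 'C(m + x, 2) by rewrite leq_bin2l // leq_addr.
rewrite addnS (binS (m + x)) (binS x.+1) !bin1; lia.
Qed.

Theorem lemma3p2 (l t s n : nat) :
  2 * s + 1 <= n -> 2 <= l -> l <= t -> l + 1 <= s ->
  ex_Klt_M_x n l t s (l - 1)
    <= (l - 1) * n + ex_Klt (2 * (s - l + 1) + 1) l t - l * (l - 1) %/ 2.
Proof.
move=> hn hl hlt hs; apply/bigmax_leqP => E /and4P [Es EK _ /eqP xE].
have [X Xadm cX] : exists2 X, admissible s E X & #|X| = l - 1.
  by rewrite -xE; apply: exists_admissible_max; rewrite xE; lia.
have cN : #|[set v | root (adjD E X) v != v]| <= 2 * (s - l + 1).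
  by apply: leq_trans (card_nonroots_adjD Xadm) _; rewrite cX; lia.
have [f [f_fibers f_inj]] := component_marking (adjD_connect_sym E X) cN.
have inside : #|edgesD E X| <= ex_Klt (2 * (s - l + 1)).+1 l t.
  have f_inj' u v : connect (adj (edgesD E X)) u v -> f u = f v -> u = v.
    by rewrite -(eq_connect (adjD_edgesD E X)); apply: f_inj.
  apply: (card_le_ex_Klt (simple_graphS (edgesD_sub E X) Es) f_fibers f_inj' hl).
    exact: leq_trans hlt.
  by apply: contra EK; apply/has_KltS/edgesD_sub.
have meeting := card_edges_meeting X Es; rewrite cX subn1 in meeting.
have := @bin2_sub l.-1 n; rewrite prednK ?(ltnW hl) //.
rewrite addn1 divn2 !subn1 -bin2 /nedges -(cardsID (edgesD E X) E) (setIidPr (edgesD_sub E X)).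
lia.
Qed.
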